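(* Under the setting below, the following formulae hold: \[ \begin{pmatrix}U_2^T\widetilde{U}_1\\ V_2^T\widetilde{V}_1\end{pmatrix} = \sum_{k=0}^{\infty} \mathcal{F}^k \begin{pmatrix}C_1\\ C_2\end{pmatrix}, \qquad \begin{pmatrix}U_1^T\widetilde{U}_2\\ V_1^T\widetilde{V}_2\end{pmatrix} = \sum_{k=0}^{\infty} \mathcal{G}^k \begin{pmatrix}C_3\\ C_4\end{pmatrix}, \] provided that $\|\mathcal{F}\|<1$ and $\|\mathcal{G}\|<1$. Here $\mathcal{F}$ and $\mathcal{G}$ are the linear operators \[ \mathcal{F}\begin{pmatrix}X_1\\ X_2\end{pmatrix} = \begin{pmatrix}F_U^{21}\circ(\Sigma_2\alpha_{22}^T X_1)+F_U^{21}\circ(\alpha_{22}X_2\widetilde\Sigma_1^T)\\ F_V^{21}\circ(\alpha_{22}^T X_1\widetilde\Sigma_1)+F_V^{21}\circ(\Sigma_2^T\alpha_{22}X_2)\end{pmatrix},\qquad \mathcal{G}\begin{pmatrix}X_3\\ X_4\end{pmatrix} = \begin{pmatrix}F_U^{12}\circ(\alpha_{11}X_4\widetilde\Sigma_2^T)+F_U^{12}\circ(\Sigma_1\alpha_{11}^T X_3)\\ F_V^{12}\circ(\Sigma_1^T\alpha_{11}X_4)+F_V^{12}\circ(\alpha_{11}^T X_3\widetilde\Sigma_2)\end{pmatrix}, \] and \begin{align*} C_1&=F_U^{21}\circ(\Sigma_2\alpha_{12}^TU_1^T\widetilde U_1+\alpha_{21}V_1^T\widetilde V_1\widetilde\Sigma_1^T),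 \quad C_2= F_V^{21}\circ(\alpha_{12}^TU_1^T\widetilde U_1\widetilde\Sigma_1+\Sigma_2^T\alpha_{21}V_1^T\widetilde V_1), \\ C_3&=F_U^{12}\circ(\alpha_{12}V_2^T\widetilde V_2\widetilde\Sigma_2^T+\Sigma_1\alpha_{21}^TU_2^T\widetilde U_2) ,\quad C_4= F_V^{12}\circ(\Sigma_1^T\alpha_{12}V_2^T\widetilde V_2+\alpha_{21}^T U_2^T\widetilde U_2\widetilde \Sigma_2), \end{align*} where \[ \alpha=\begin{pmatrix} \alpha_{11} & \alpha_{12} \\ \alpha_{21} & \alpha_{22} \end{pmatrix} \equiv \begin{pmatrix} U_1^T \Delta A V_1 & U_1^T \Delta A V_2 \\ U_2^T \Delta A V_1 & U_2^T \Delta A V_2 \end{pmatrix} =U^T \Delta A V. \]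
   Context: Let $A$ and $\widetilde A=A+\Delta A$ be two $n\times m$ real matrices, $A$ of rank at least $r$, with conformal full SVDs $A=U\Sigma V^T=\begin{pmatrix}U_1 & U_2\end{pmatrix}\begin{pmatrix}\Sigma_1 & \\ & \Sigma_2\end{pmatrix}\begin{pmatrix}V_1^T\\ V_2^T\end{pmatrix}$ and $\widetilde A=\widetilde U\widetilde\Sigma\widetilde V^T=\begin{pmatrix}\widetilde U_1 & \widetilde U_2\end{pmatrix}\begin{pmatrix}\widetilde\Sigma_1 & \\ & \widetilde\Sigma_2\end{pmatrix}\begin{pmatrix}\widetilde V_1^T\\ \widetilde V_2^T\end{pmatrix}$, where $U_1\in\mathbb{R}^{n,r}$, $U_2\in\mathbb{R}^{n,n-r}$, $V_1\in\mathbb{R}^{m,r}$, $V_2\in\mathbb{R}^{m,m-r}$, $\Sigma_1=\mathrm{diag}\{\sigma_1,\dots,\sigma_r\}$, $\Sigma_2$ contains $\sigma_{r+1},\dots,\sigma_{\min\{n,m\}}$ (singular values of $A$ in descending order), and similarly for $\widetilde A$ with singular values $\widetilde\sigma_i$. Assume $\sigma_r-\widetilde\sigma_{r+1}>0$ and $\widetilde\sigma_r-\sigma_{r+1}>0$. Set $\sigma_i=\widetilde\sigma_i=0$ for $i>\min\{n,m\}$. $\circ$ denotes the Hadamard (entrywise) product. $F_U^{12}\in\mathbb{R}^{r,n-r}$ has entries $(F_U^{12})_{i,j-r}=\frac{1}{\widetilde\sigma_j^2-\sigma_i^2}$, $1\le i\le r$, $r+1\le j\le n$; $F_U^{21}\in\mathbb{R}^{n-r,r}$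 has entries $(F_U^{21})_{i-r,j}=\frac{1}{\widetilde\sigma_j^2-\sigma_i^2}$, $r+1\le i\le n$, $1\le j\le r$; $F_V^{12}\in\mathbb{R}^{r,m-r}$ has entries $(F_V^{12})_{i,j-r}=\frac{1}{\widetilde\sigma_j^2-\sigma_i^2}$, $1\le i\le r$, $r+1\le j\le m$; $F_V^{21}\in\mathbb{R}^{m-r,r}$ has entries $(F_V^{21})_{i-r,j}=\frac{1}{\widetilde\sigma_j^2-\sigma_i^2}$, $r+1\le i\le m$, $1\le j\le r$. *)

From HB Require Import structures.
From mathcomp Require Import all_boot all_order all_algebra.
From mathcomp Require Import all_classical all_reals all_analysis.
Set Implicit Arguments. Unset Strict Implicit. Unset Printing Implicit Defensive.
Import Order.TTheory GRing.Theory Num.Theory.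
Local Open Scope ring_scope.

Section Defs.
Variable R : realType.

Definition hadamard p q (A B : 'M[R]_(p, q)) : 'M[R]_(p, q) :=
  map2_mx (fun a b => a * b) A B.

Definition frob p q (A : 'M[R]_(p, q)) : R :=
  Num.sqrt (\sum_(i < p) \sum_(j < q) A i j ^+ 2).

Definition opnorm p q (f : 'M[R]_(p, q) -> 'M[R]_(p, q)) : R :=
  sup [set x : R | exists Y : 'M[R]_(p, q), Y != 0 /\ x = frob (f Y) / frob Y].

(* The n x m "diagonal" matrix of singular values s 0, s 1, ... (0-indexed:
   s i is sigma_{i+1} of the paper). *)
Definition sing_diag n m (s : nat -> R) : 'M[R]_(n, m) :=
  \matrix_(i < n, j < m) (if (i : nat) == j then s i else 0).

Definition is_full_svd n m (A : 'M[R]_(n, m)) (U : 'M[R]_n) (V : 'M[R]_m)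
    (s : nat -> R) : Prop :=
  [/\ U^T *m U = 1%:M, V^T *m V = 1%:M,
      A = U *m sing_diag n m s *m V^T &
      [/\ (forall i, 0 <= s i),
           (forall i j, (i <= j)%N -> s j <= s i) &
           (forall i, (minn n m <= i)%N -> s i = 0)]].

Definition F12 r k (s st : nat -> R) : 'M[R]_(r, k) :=
  \matrix_(i < r, j < k) (st (r + j)%N ^+ 2 - s i ^+ 2)^-1.
Definition F21 r k (s st : nat -> R) : 'M[R]_(k, r) :=
  \matrix_(i < k, j < r) (st j ^+ 2 - s (r + i)%N ^+ 2)^-1.

Definition Fop r n2 m2 (FU21 : 'M[R]_(n2, r)) (FV21 : 'M[R]_(m2, r))
    (a22 : 'M[R]_(n2, m2)) (S2 : 'M[R]_(n2, m2)) (St1 : 'M[R]_r)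
    (Y : 'M[R]_(n2 + m2, r)) : 'M[R]_(n2 + m2, r) :=
  let X1 := usubmx Y in let X2 := dsubmx Y in
  col_mx (hadamard FU21 (S2 *m a22^T *m X1) + hadamard FU21 (a22 *m X2 *m St1^T))
         (hadamard FV21 (a22^T *m X1 *m St1) + hadamard FV21 (S2^T *m a22 *m X2)).

Definition Gop r n2 m2 (FU12 : 'M[R]_(r, n2)) (FV12 : 'M[R]_(r, m2))
    (a11 : 'M[R]_r) (S1 : 'M[R]_r) (St2 : 'M[R]_(n2, m2))
    (Y : 'M[R]_(r, n2 + m2)) : 'M[R]_(r, n2 + m2) :=
  let X3 := lsubmx Y in let X4 := rsubmx Y in
  row_mx (hadamard FU12 (a11 *m X4 *m St2^T) + hadamard FU12 (S1 *m a11^T *m X3))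
         (hadamard FV12 (S1^T *m a11 *m X4) + hadamard FV12 (a11^T *m X3 *m St2)).

End Defs.

From HB Require Import structures.
From mathcomp Require Import all_boot all_order all_algebra.
From mathcomp Require Import all_classical all_reals all_analysis.
From mathcomp Require Import lra.
Set Implicit Arguments. Unset Strict Implicit. Unset Printing Implicit Defensive.
Import Order.TTheory GRing.Theory Num.Theory.
Import numFieldTopology.Exports numFieldNormedType.Exports.
Local Open Scope ring_scope.
Local Open Scope classical_set_scope.

(* Put M := U^T Ut, N := V^T Vt and alpha := U^T dA V.  The two SVDs give
   M St = (S + alpha) N and N St^T = (S^T + alpha^T) M, hence the Sylvester
   equations
     M (St St^T) - (S S^T) M = S alpha^T M + alpha N St^T,
     N (St^T St) - (S^T S) N = S^T alpha N + alpha^T M St.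
   Both Gram matrices of a singular value matrix are diagonal, so the
   off-diagonal blocks of these equations can be solved entrywise by dividing
   by st_j^2 - s_i^2, which the gap conditions keep away from 0.  This exhibits
   (U2^T Ut1; V2^T Vt1) as a fixed point of X |-> F X + (C1; C2), and likewise
   for G; a fixed point of a linear map of operator norm < 1 is the sum of
   the Neumann series. *)

Section Frobenius.
Variable R : realType.
Implicit Types p q : nat.

Lemma frob_ge0 p q (A : 'M[R]_(p, q)) : 0 <= frob A.
Proof. exact: sqrtr_ge0. Qed.

Lemma frob0 p q : frob (0 : 'M[R]_(p, q)) = 0.
Proof.
rewrite /frob big1 ?sqrtr0 // => i _.
by rewrite big1 // => j _; rewrite mxE expr0n.
Qed.

Lemma normr_le_frob p q (A : 'M[R]_(p, q)) i j : `|A i j| <= frob A.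
Proof.
rewrite /frob -sqrtr_sqr; apply: ler_wsqrtr.
rewrite (bigD1 i) //= (bigD1 j) //= -addrA lerDl.
rewrite addr_ge0 ?sumr_ge0 // => [k _|k _]; first exact: sqr_ge0.
by rewrite sumr_ge0 // => l _; exact: sqr_ge0.
Qed.

Lemma frob_gt0 p q (A : 'M[R]_(p, q)) : A != 0 -> 0 < frob A.
Proof.
apply: contraNT; rewrite -leNgt => A_le0; apply/eqP/matrixP => i j; rewrite mxE.
by apply/normr0_eq0/le_anti; rewrite normr_ge0 (le_trans (normr_le_frob A i j)).
Qed.

Lemma mx_norm_le_frob p q (A : 'M[R]_(p, q)) : `|A| <= frob A.
Proof.
rewrite [leLHS]/Num.norm /= mx_normrE.
by apply: bigmax_le => [|[i j] _]; [exact: frob_ge0 | exact: normr_le_frob].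
Qed.

End Frobenius.

Section NeumannSeries.
Variables (R : realType) (p q : nat) (f : 'M[R]_(p, q) -> 'M[R]_(p, q)).
Hypotheses (f_additive : {morph f : A B / A + B}) (f_scalable : scalable f).

Let f0 : f 0 = 0.
Proof. by have := f_scalable 0 0; rewrite !scale0r. Qed.

Lemma frob_linear_bound : exists K, forall Y, frob (f Y) <= K * frob Y.
Proof.
pose B i j := \sum_(k < p) \sum_(l < q) `|f (delta_mx k l) i j|.
exists (Num.sqrt (\sum_i \sum_j B i j ^+ 2)) => Y.
have f_expand : f Y = \sum_(k < p) \sum_(l < q) Y k l *: f (delta_mx k l).
  rewrite {1}(matrix_sum_delta Y) (big_morph f f_additive f0).
  apply: eq_bigr => k _; rewrite (big_morph f f_additive f0).
  by apply: eq_bigr => l _; rewrite f_scalable.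
have entry_le i j : `|f Y i j| <= frob Y * B i j.
  rewrite f_expand summxE (le_trans (ler_norm_sum _ _ _)) // mulr_sumr.
  apply: ler_sum => k _; rewrite summxE (le_trans (ler_norm_sum _ _ _)) // mulr_sumr.
  by apply: ler_sum => l _; rewrite mxE normrM ler_wpM2r ?normr_le_frob.
rewrite mulrC -[frob Y]ger0_norm ?frob_ge0 // -sqrtr_sqr -sqrtrM ?sqr_ge0 //.
apply: ler_wsqrtr; rewrite mulr_sumr; apply: ler_sum => i _.
rewrite mulr_sumr; apply: ler_sum => j _.
rewrite -exprMn -real_normK ?num_real // lerXn2r ?nnegrE ?normr_ge0 ?entry_le //.
by rewrite mulr_ge0 ?frob_ge0 ?sumr_ge0 // => k _; rewrite sumr_ge0.
Qed.

Lemma frob_le_opnorm Y : frob (f Y) <= opnorm f * frob Y.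
Proof.
have [->|Y0] := eqVneq Y 0; first by rewrite f0 !frob0 mulr0.
rewrite -ler_pdivrMr ?frob_gt0 //; apply: sup_upper_bound; last by exists Y.
split; first by exists (frob (f Y) / frob Y), Y.
have [K f_le] := frob_linear_bound.
by exists K => _ [Z [Z0 ->]]; rewrite ler_pdivrMr ?frob_gt0.
Qed.

Lemma opnorm_ge0 : 0 <= opnorm f.
Proof.
have [[Y Y0]|no_Y] := pselect (exists Y : 'M[R]_(p, q), Y != 0).
  rewrite -(pmulr_lge0 _ (frob_gt0 Y0)) (le_trans _ (frob_le_opnorm Y)) //.
  exact: frob_ge0.
suff ratios0 : [set x | exists Y, Y != 0 /\ x = frob (f Y) / frob Y] = set0.
  by rewrite /opnorm ratios0 sup0.
by apply/seteqP; split => // x [Y [Y0 _]]; apply: no_Y; exists Y.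
Qed.

Lemma frob_iter_le N Y : frob (iter N f Y) <= opnorm f ^+ N * frob Y.
Proof.
elim: N => [|N IH]; first by rewrite mul1r.
rewrite iterS exprS -mulrA (le_trans (frob_le_opnorm _)) // ler_wpM2l //.
exact: opnorm_ge0.
Qed.

Lemma iter_additive N : {morph iter N f : A B / A + B}.
Proof. by elim: N => // N IH A B; rewrite !iterS IH f_additive. Qed.

Lemma fixpoint_neumann_sum X C N :
  X = f X + C -> X = \sum_(k < N) iter k f C + iter N f X.
Proof.
move=> X_fix; elim: N => [|N IH]; first by rewrite big_ord0 add0r.
rewrite {1}IH {1}X_fix iter_additive -iterSr big_ord_recr /=.
by rewrite addrAC addrA.
Qed.

Theorem neumann_series_cvg X C : X = f X + C -> opnorm f < 1 ->
  (fun N : nat => \sum_(k < N) iter k f C) @ \oo --> X.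
Proof.
move=> X_fix f_lt1; apply/subr_cvg0/norm_cvg0P.
apply: (squeeze_cvgr (f := cst 0) (h := fun N => opnorm f ^+ N * frob X)).
- apply: nearW => N; rewrite normr_ge0 /=.
  rewrite {1}(fixpoint_neumann_sum N X_fix) opprD addNKr normrN.
  exact: le_trans (mx_norm_le_frob _) (frob_iter_le _ _).
- exact: cvg_cst.
- rewrite -(mul0r (frob X)); apply: cvgMl; apply: cvg_expr.
  by rewrite ger0_norm ?opnorm_ge0.
Qed.
End NeumannSeries.

Section MatrixIdentities.
Variable R : comRingType.

Lemma mul_trmx_hsub n p q (X Y : 'M[R]_(n, p + q)) :
  X^T *m Y = block_mx ((lsubmx X)^T *m lsubmx Y) ((lsubmx X)^T *m rsubmx Y)
                      ((rsubmx X)^T *m lsubmx Y) ((rsubmx X)^T *m rsubmx Y).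
Proof. by rewrite -{1}[X]hsubmxK -{1}[Y]hsubmxK tr_row_mx mul_col_row. Qed.

Lemma dlsubmx_blockdiag_sum r n m (D1 E1 : 'M[R]_r) (D2 : 'M[R]_(n, m))
    (E2 : 'M[R]_(m, n)) (a : 'M[R]_(r + n, r + m)) (b : 'M[R]_(r + m, r + n))
    (M : 'M[R]_(r + n)) (N : 'M[R]_(r + m)) :
  dlsubmx (block_mx D1 0 0 D2 *m b *m M + a *m N *m block_mx E1 0 0 E2)
  = D2 *m drsubmx b *m dlsubmx M + drsubmx a *m dlsubmx N *m E1
    + (D2 *m dlsubmx b *m ulsubmx M + dlsubmx a *m ulsubmx N *m E1).
Proof.
rewrite -[a in LHS]submxK -[b in LHS]submxK -[M in LHS]submxK -[N in LHS]submxK.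
rewrite !mulmx_block add_block_mx block_mxKdl.
rewrite !(mul0mx, mulmx0, add0r, addr0) mulmxDl.
by rewrite addrACA addrC.
Qed.

Lemma ursubmx_blockdiag_sum r n m (D1 E1 : 'M[R]_r) (D2 : 'M[R]_(n, m))
    (E2 : 'M[R]_(m, n)) (a : 'M[R]_(r + n, r + m)) (b : 'M[R]_(r + m, r + n))
    (M : 'M[R]_(r + n)) (N : 'M[R]_(r + m)) :
  ursubmx (block_mx D1 0 0 D2 *m b *m M + a *m N *m block_mx E1 0 0 E2)
  = ulsubmx a *m ursubmx N *m E2 + D1 *m ulsubmx b *m ursubmx M
    + (ursubmx a *m drsubmx N *m E2 + D1 *m ursubmx b *m drsubmx M).
Proof.
rewrite -[a in LHS]submxK -[b in LHS]submxK -[M in LHS]submxK -[N in LHS]submxK.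
rewrite !mulmx_block add_block_mx block_mxKur.
rewrite !(mul0mx, mulmx0, add0r, addr0) mulmxDl.
by rewrite addrC addrACA.
Qed.

Lemma diag_sylvester p q (X : 'M[R]_(p, q)) (a b : nat -> R) :
  X *m diag_mx (\row_(j < q) b j) - diag_mx (\row_(i < p) a i) *m X
  = \matrix_(i, j) ((b j - a i) * X i j).
Proof.
by apply/matrixP => i j; rewrite mul_mx_diag mul_diag_mx !mxE mulrBl mulrC.
Qed.

Lemma svd_intertwine n m (A dA S St : 'M[R]_(n, m)) (U Ut : 'M[R]_n)
    (V Vt : 'M[R]_m) :
  U^T *m U = 1%:M -> V^T *m V = 1%:M -> Vt^T *m Vt = 1%:M ->
  A = U *m S *m V^T -> A + dA = Ut *m St *m Vt^T ->
  U^T *m Ut *m St = (S + U^T *m dA *m V) *m (V^T *m Vt).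
Proof.
move=> UU VV VtVt defA defAt.
have VVt : V *m V^T = 1%:M := mulmx1C VV.
transitivity (U^T *m (A + dA) *m Vt).
  by rewrite defAt !mulmxA -(mulmxA _ Vt^T) VtVt mulmx1.
by rewrite defA mulmxDr mulmxDl !mulmxA UU mul1mx !mulmxDl -(mulmxA _ V) VVt mulmx1.
Qed.

End MatrixIdentities.

Section SingularValuePerturbation.
Variable R : realType.

Lemma hadamardDr p q (F A B : 'M[R]_(p, q)) :
  hadamard F (A + B) = hadamard F A + hadamard F B.
Proof. by apply/matrixP => i j; rewrite !mxE mulrDr. Qed.

Lemma hadamardZr p q (F A : 'M[R]_(p, q)) a :
  hadamard F (a *: A) = a *: hadamard F A.
Proof. by apply/matrixP => i j; rewrite !mxE mulrCA. Qed.

Lemma dlsubmx_diag_sylvester p1 p2 q1 q2 (X B : 'M[R]_(p1 + p2, q1 + q2))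
    (a b : nat -> R) :
  X *m diag_mx (\row_j b j) - diag_mx (\row_i a i) *m X = B ->
  (forall (i : 'I_p2) (j : 'I_q1), b j != a (p1 + i)%N) ->
  dlsubmx X = hadamard (\matrix_(i < p2, j < q1) (b j - a (p1 + i)%N)^-1) (dlsubmx B).
Proof.
move=> <- ab_neq; rewrite diag_sylvester; apply/matrixP => i j.
by rewrite !mxE mulKf // subr_eq0 ab_neq.
Qed.

Lemma ursubmx_diag_sylvester p1 p2 q1 q2 (X B : 'M[R]_(p1 + p2, q1 + q2))
    (a b : nat -> R) :
  X *m diag_mx (\row_j b j) - diag_mx (\row_i a i) *m X = B ->
  (forall (i : 'I_p1) (j : 'I_q2), b (q1 + j)%N != a i) ->
  ursubmx X = hadamard (\matrix_(i < p1, j < q2) (b (q1 + j)%N - a i)^-1) (ursubmx B).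
Proof.
move=> <- ab_neq; rewrite diag_sylvester; apply/matrixP => i j.
by rewrite !mxE mulKf // subr_eq0 ab_neq.
Qed.

Lemma trmx_sing_diag n m (s : nat -> R) : (sing_diag n m s)^T = sing_diag m n s.
Proof. by apply/matrixP => i j; rewrite !mxE eq_sym; case: eqP => // ->. Qed.

Lemma sing_diag_block r n m (s : nat -> R) :
  sing_diag (r + n) (r + m) s
  = block_mx (ulsubmx (sing_diag (r + n) (r + m) s)) 0
             0 (drsubmx (sing_diag (r + n) (r + m) s)).
Proof.
rewrite -[LHS]submxK; congr block_mx; apply/matrixP => i j; rewrite !mxE /=.
  by rewrite ltn_eqF // ltn_addr.
by rewrite gtn_eqF // ltn_addr.
Qed.

Lemma sing_diag_mul_tr n m (s : nat -> R) :
  (forall i, (minn n m <= i)%N -> s i = 0) ->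
  sing_diag n m s *m (sing_diag n m s)^T = diag_mx (\row_(i < n) s i ^+ 2).
Proof.
move=> s_min; apply/matrixP => i j; rewrite !mxE.
under eq_bigr => k _ do rewrite !mxE.
have [im|mi] := ltnP i m; last first.
  have si0 : s i = 0 by apply: s_min; rewrite (leq_trans (geq_minr _ _)).
  rewrite si0 expr0n mul0rn big1 // => k _.
  by case: eqP; rewrite ?si0 mul0r.
rewrite (bigD1 (Ordinal im)) //= eqxx big1 ?addr0 => [|k]; last first.
  by rewrite -val_eqE /= eq_sym => /negPf ->; rewrite mul0r.
have [<-|ij] := eqVneq i j; first by rewrite eqxx mulr1n expr2.
by rewrite val_eqE [j == i]eq_sym (negPf ij) mulr0 mulr0n.
Qed.

Lemma is_full_svd_tr n m (A : 'M[R]_(n, m)) U V (s : nat -> R) :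
  is_full_svd A U V s -> is_full_svd A^T V U s.
Proof.
case=> UU VV defA [s_ge0 s_dec s_min]; split=> //.
  by rewrite defA !trmx_mul trmxK trmx_sing_diag mulmxA.
by split=> // i; rewrite minnC; exact: s_min.
Qed.

Lemma svd_sylvester n m (A dA : 'M[R]_(n, m)) U Ut V Vt (s st : nat -> R) :
  is_full_svd A U V s -> is_full_svd (A + dA) Ut Vt st ->
  U^T *m Ut *m diag_mx (\row_i st i ^+ 2) - diag_mx (\row_i s i ^+ 2) *m (U^T *m Ut)
  = sing_diag n m s *m (U^T *m dA *m V)^T *m (U^T *m Ut)
    + U^T *m dA *m V *m (V^T *m Vt) *m (sing_diag n m st)^T.
Proof.
move=> svdA svdAt; have [UU VV defA [_ _ s_min]] := svdA.
have [UtUt VtVt defAt [_ _ st_min]] := svdAt.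
rewrite -(sing_diag_mul_tr s_min) -(sing_diag_mul_tr st_min).
set S := sing_diag n m s in defA *; set St := sing_diag n m st in defAt *.
set alpha := U^T *m dA *m V.
have intertwineU : U^T *m Ut *m St = (S + alpha) *m (V^T *m Vt).
  exact: svd_intertwine UU VV VtVt defA defAt.
have intertwineV : V^T *m Vt *m St^T = (S^T + alpha^T) *m (U^T *m Ut).
  have [_ _ defAT _] := is_full_svd_tr svdA.
  have [_ _ defAtT _] := is_full_svd_tr svdAt.
  rewrite linearD /= in defAtT.
  rewrite /St trmx_sing_diag (svd_intertwine VV UU UtUt defAT defAtT).
  by rewrite /S /alpha trmx_sing_diag !trmx_mul trmxK [V^T *m (_ *m _)]mulmxA.
rewrite mulmxA intertwineU !mulmxDl -[S *m _ *m St^T]mulmxA intertwineV.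
by rewrite mulmxDl mulmxDr !mulmxA addrC !addrA addNr add0r.
Qed.

Section LinearOperators.
Variables (r n2 m2 : nat).

Section Fop.
Variables (FU21 : 'M[R]_(n2, r)) (FV21 : 'M[R]_(m2, r)) (a22 S2 : 'M[R]_(n2, m2)).
Variable St1 : 'M[R]_r.

Lemma Fop_additive : {morph Fop FU21 FV21 a22 S2 St1 : Y Z / Y + Z}.
Proof.
move=> Y Z; rewrite /Fop /= -[Y]vsubmxK -[Z]vsubmxK add_col_mx !col_mxKu !col_mxKd.
by rewrite !(mulmxDr, mulmxDl) !hadamardDr add_col_mx addrACA [X in col_mx _ X]addrACA.
Qed.

Lemma Fop_scalable : scalable (Fop FU21 FV21 a22 S2 St1).
Proof.
move=> a Y; rewrite /Fop /= -[Y]vsubmxK scale_col_mx !col_mxKu !col_mxKd.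
by rewrite -!scalemxAr -?scalemxAl -?scalemxAr !hadamardZr scale_col_mx !scalerDr.
Qed.

End Fop.

Section Gop.
Variables (FU12 : 'M[R]_(r, n2)) (FV12 : 'M[R]_(r, m2)) (a11 S1 : 'M[R]_r).
Variable St2 : 'M[R]_(n2, m2).

Lemma Gop_additive : {morph Gop FU12 FV12 a11 S1 St2 : Y Z / Y + Z}.
Proof.
move=> Y Z; rewrite /Gop /= -[Y]hsubmxK -[Z]hsubmxK add_row_mx !row_mxKl !row_mxKr.
by rewrite !(mulmxDr, mulmxDl) !hadamardDr add_row_mx addrACA [X in row_mx _ X]addrACA.
Qed.

Lemma Gop_scalable : scalable (Gop FU12 FV12 a11 S1 St2).
Proof.
move=> a Y; rewrite /Gop /= -[Y]hsubmxK scale_row_mx !row_mxKl !row_mxKr.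
by rewrite -!scalemxAr -?scalemxAl -?scalemxAr !hadamardZr scale_row_mx !scalerDr.
Qed.

End Gop.
End LinearOperators.

End SingularValuePerturbation.

Section SingularSubspaceFixpoints.
Variables (R : realType) (r n2 m2 : nat).
Variables (A dA : 'M[R]_(r + n2, r + m2)) (U Ut : 'M[R]_(r + n2)).
Variables (V Vt : 'M[R]_(r + m2)) (s st : nat -> R).
Hypothesis r_gt0 : (0 < r)%N.
Hypotheses (svdA : is_full_svd A U V s) (svdAt : is_full_svd (A + dA) Ut Vt st).
Hypotheses (gap_s : 0 < s r.-1 - st r) (gap_st : 0 < st r.-1 - s r).

Local Notation U1 := (lsubmx U). Local Notation U2 := (rsubmx U).
Local Notation V1 := (lsubmx V). Local Notation V2 := (rsubmx V).
Local Notation Ut1 := (lsubmx Ut). Local Notation Ut2 := (rsubmx Ut).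
Local Notation Vt1 := (lsubmx Vt). Local Notation Vt2 := (rsubmx Vt).
Local Notation S := (sing_diag (r + n2) (r + m2) s).
Local Notation St := (sing_diag (r + n2) (r + m2) st).
Local Notation S1 := (ulsubmx S). Local Notation S2 := (drsubmx S).
Local Notation St1 := (ulsubmx St). Local Notation St2 := (drsubmx St).
Local Notation alpha := (U^T *m dA *m V).
Local Notation a11 := (ulsubmx alpha). Local Notation a12 := (ursubmx alpha).
Local Notation a21 := (dlsubmx alpha). Local Notation a22 := (drsubmx alpha).

Lemma sqr_gap_low i j : (j < r)%N -> st j ^+ 2 != s (r + i)%N ^+ 2.
Proof.
move=> lt_jr; have [_ _ _ [s_ge0 s_dec _]] := svdA; have [_ _ _ [_ st_dec _]] := svdAt.
have s_le : s (r + i)%N <= s r by apply: s_dec; rewrite leq_addr.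
have st_ge : st r.-1 <= st j by apply: st_dec; rewrite -ltnS prednK.
by rewrite gt_eqF // ltrXn2r ?s_ge0 //; move: gap_st; lra.
Qed.

Lemma sqr_gap_high i j : (i < r)%N -> st (r + j)%N ^+ 2 != s i ^+ 2.
Proof.
move=> lt_ir; have [_ _ _ [_ s_dec _]] := svdA; have [_ _ _ [st_ge0 st_dec _]] := svdAt.
have st_le : st (r + j)%N <= st r by apply: st_dec; rewrite leq_addr.
have s_ge : s r.-1 <= s i by apply: s_dec; rewrite -ltnS prednK.
by rewrite lt_eqF // ltrXn2r ?st_ge0 //; move: gap_s; lra.
Qed.

Lemma sylvester_U :
  U^T *m Ut *m diag_mx (\row_i st i ^+ 2) - diag_mx (\row_i s i ^+ 2) *m (U^T *m Ut)
  = block_mx S1 0 0 S2 *m alpha^T *m (U^T *m Ut)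
    + alpha *m (V^T *m Vt) *m block_mx St1^T 0 0 St2^T.
Proof.
rewrite (svd_sylvester svdA svdAt) -(sing_diag_block r n2 m2 s).
by rewrite [in LHS](sing_diag_block r n2 m2 st) tr_block_mx !trmx0.
Qed.

Lemma sylvester_V :
  V^T *m Vt *m diag_mx (\row_i st i ^+ 2) - diag_mx (\row_i s i ^+ 2) *m (V^T *m Vt)
  = block_mx S1^T 0 0 S2^T *m alpha *m (V^T *m Vt)
    + alpha^T *m (U^T *m Ut) *m block_mx St1 0 0 St2.
Proof.
have svdAtT := is_full_svd_tr svdAt; rewrite linearD /= in svdAtT.
have alphaT : V^T *m dA^T *m U = alpha^T by rewrite !trmx_mul trmxK mulmxA.
rewrite (svd_sylvester (is_full_svd_tr svdA) svdAtT) alphaT trmxK trmx_sing_diag.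
rewrite -[sing_diag (r + m2) (r + n2) s]trmx_sing_diag.
rewrite [in LHS](sing_diag_block r n2 m2 s) [in LHS](sing_diag_block r n2 m2 st).
by rewrite tr_block_mx !trmx0.
Qed.

Lemma U21_fixpoint :
  U2^T *m Ut1 = hadamard (F21 r n2 s st)
    (S2 *m a22^T *m (U2^T *m Ut1) + a22 *m (V2^T *m Vt1) *m St1^T
     + (S2 *m a12^T *m (U1^T *m Ut1) + a21 *m (V1^T *m Vt1) *m St1^T)).
Proof.
have := dlsubmx_diag_sylvester (a := fun i => s i ^+ 2) (b := fun j => st j ^+ 2)
  sylvester_U (fun i (j : 'I_r) => sqr_gap_low i (ltn_ord j)).
rewrite dlsubmx_blockdiag_sum (mul_trmx_hsub U Ut) (mul_trmx_hsub V Vt).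
by rewrite !block_mxKdl !block_mxKul -trmx_drsub -trmx_ursub.
Qed.

Lemma V21_fixpoint :
  V2^T *m Vt1 = hadamard (F21 r m2 s st)
    (a22^T *m (U2^T *m Ut1) *m St1 + S2^T *m a22 *m (V2^T *m Vt1)
     + (a12^T *m (U1^T *m Ut1) *m St1 + S2^T *m a21 *m (V1^T *m Vt1))).
Proof.
have := dlsubmx_diag_sylvester (a := fun i => s i ^+ 2) (b := fun j => st j ^+ 2)
  sylvester_V (fun i (j : 'I_r) => sqr_gap_low i (ltn_ord j)).
rewrite dlsubmx_blockdiag_sum (mul_trmx_hsub U Ut) (mul_trmx_hsub V Vt).
rewrite !block_mxKdl !block_mxKul -trmx_drsub -trmx_ursub.
by rewrite [X in _ + X]addrC [X in X + _]addrC.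
Qed.

Lemma U12_fixpoint :
  U1^T *m Ut2 = hadamard (F12 r n2 s st)
    (a11 *m (V1^T *m Vt2) *m St2^T + S1 *m a11^T *m (U1^T *m Ut2)
     + (a12 *m (V2^T *m Vt2) *m St2^T + S1 *m a21^T *m (U2^T *m Ut2))).
Proof.
have := ursubmx_diag_sylvester (a := fun i => s i ^+ 2) (b := fun j => st j ^+ 2)
  sylvester_U (fun (i : 'I_r) j => sqr_gap_high j (ltn_ord i)).
rewrite ursubmx_blockdiag_sum (mul_trmx_hsub U Ut) (mul_trmx_hsub V Vt).
by rewrite !block_mxKur !block_mxKdr -trmx_ulsub -trmx_dlsub.
Qed.

Lemma V12_fixpoint :
  V1^T *m Vt2 = hadamard (F12 r m2 s st)
    (S1^T *m a11 *m (V1^T *m Vt2) + a11^T *m (U1^T *m Ut2) *m St2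
     + (S1^T *m a12 *m (V2^T *m Vt2) + a21^T *m (U2^T *m Ut2) *m St2)).
Proof.
have := ursubmx_diag_sylvester (a := fun i => s i ^+ 2) (b := fun j => st j ^+ 2)
  sylvester_V (fun (i : 'I_r) j => sqr_gap_high j (ltn_ord i)).
rewrite ursubmx_blockdiag_sum (mul_trmx_hsub U Ut) (mul_trmx_hsub V Vt).
rewrite !block_mxKur !block_mxKdr -trmx_ulsub -trmx_dlsub.
by rewrite [X in _ + X]addrC [X in X + _]addrC.
Qed.

Lemma Fop_fixpoint :
  col_mx (U2^T *m Ut1) (V2^T *m Vt1)
  = Fop (F21 r n2 s st) (F21 r m2 s st) a22 S2 St1 (col_mx (U2^T *m Ut1) (V2^T *m Vt1))
    + col_mx
        (hadamard (F21 r n2 s st)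
           (S2 *m a12^T *m (U1^T *m Ut1) + a21 *m (V1^T *m Vt1) *m St1^T))
        (hadamard (F21 r m2 s st)
           (a12^T *m (U1^T *m Ut1) *m St1 + S2^T *m a21 *m (V1^T *m Vt1))).
Proof.
rewrite /Fop /= col_mxKu col_mxKd add_col_mx -!hadamardDr.
by rewrite -U21_fixpoint -V21_fixpoint.
Qed.

Lemma Gop_fixpoint :
  row_mx (U1^T *m Ut2) (V1^T *m Vt2)
  = Gop (F12 r n2 s st) (F12 r m2 s st) a11 S1 St2 (row_mx (U1^T *m Ut2) (V1^T *m Vt2))
    + row_mx
        (hadamard (F12 r n2 s st)
           (a12 *m (V2^T *m Vt2) *m St2^T + S1 *m a21^T *m (U2^T *m Ut2)))
        (hadamard (F12 r m2 s st)
           (S1^T *m a12 *m (V2^T *m Vt2) + a21^T *m (U2^T *m Ut2) *m St2)).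
Proof.
rewrite /Gop /= row_mxKl row_mxKr add_row_mx -!hadamardDr.
by rewrite -U12_fixpoint -V12_fixpoint.
Qed.

End SingularSubspaceFixpoints.

Theorem theorem2p7 (R : realType) (r n2 m2 : nat)
    (A dA : 'M[R]_(r + n2, r + m2)) (U Ut : 'M[R]_(r + n2)) (V Vt : 'M[R]_(r + m2))
    (s st : nat -> R) :
  (0 < r)%N -> (r <= \rank A)%N ->
  is_full_svd A U V s -> is_full_svd (A + dA) Ut Vt st ->
  0 < s r.-1 - st r -> 0 < st r.-1 - s r ->
  let U1 := lsubmx U in let U2 := rsubmx U in
  let V1 := lsubmx V in let V2 := rsubmx V in
  let Ut1 := lsubmx Ut in let Ut2 := rsubmx Ut in
  let Vt1 := lsubmx Vt in let Vt2 := rsubmx Vt in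
  let S := sing_diag (r + n2) (r + m2) s in
  let St := sing_diag (r + n2) (r + m2) st in
  let S1 := ulsubmx S in let S2 := drsubmx S in
  let St1 := ulsubmx St in let St2 := drsubmx St in
  let alpha := U^T *m dA *m V in
  let a11 := ulsubmx alpha in let a12 := ursubmx alpha in
  let a21 := dlsubmx alpha in let a22 := drsubmx alpha in
  let FU12 := F12 r n2 s st in let FU21 := F21 r n2 s st in
  let FV12 := F12 r m2 s st in let FV21 := F21 r m2 s st in
  let F := Fop FU21 FV21 a22 S2 St1 in
  let G := Gop FU12 FV12 a11 S1 St2 in
  let C1 := hadamard FU21 (S2 *m a12^T *m (U1^T *m Ut1) + a21 *m (V1^T *m Vt1) *m St1^T) in
  let C2 := hadamard FV21 (a12^T *m (U1^T *m Ut1) *m St1 + S2^T *m a21 *m (V1^T *m Vt1)) in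
  let C3 := hadamard FU12 (a12 *m (V2^T *m Vt2) *m St2^T + S1 *m a21^T *m (U2^T *m Ut2)) in
  let C4 := hadamard FV12 (S1^T *m a12 *m (V2^T *m Vt2) + a21^T *m (U2^T *m Ut2) *m St2) in
  opnorm F < 1 -> opnorm G < 1 ->
  (fun N : nat => \sum_(k < N) iter k F (col_mx C1 C2)) @ \oo
      --> col_mx (U2^T *m Ut1) (V2^T *m Vt1) /\
  (fun N : nat => \sum_(k < N) iter k G (row_mx C3 C4)) @ \oo
      --> row_mx (U1^T *m Ut2) (V1^T *m Vt2).
Proof.
move=> r_gt0 _ svdA svdAt gap_s gap_st U1 U2 V1 V2 Ut1 Ut2 Vt1 Vt2 S St S1 S2 St1 St2.
move=> alpha a11 a12 a21 a22 FU12 FU21 FV12 FV21 F G C1 C2 C3 C4 F_lt1 G_lt1.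
split; apply: neumann_series_cvg => //.
- exact: Fop_additive.
- exact: Fop_scalable.
- exact: Fop_fixpoint r_gt0 svdA svdAt gap_st.
- exact: Gop_additive.
- exact: Gop_scalable.
- exact: Gop_fixpoint r_gt0 svdA svdAt gap_s.
Qed.
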